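(* Let $(H,\alpha_H)$ be a Hom-bialgebra, let $m\in\mathbb Z$, and for Hom-Long dimodules $(U,\alpha_U),(V,\alpha_V)$ define $\xi_{U,V}:U\otimes V\to U\otimes V$, $u\otimes v\mapsto\alpha_U^{-1}(u)\cdot\alpha_H^m(v_{(1)})\otimes\alpha_V^{-1}(v_{(0)})$. Then for all Hom-Long dimodules $U,V,W$, $$(\xi_{U,V}\otimes\mathrm{id}_W)\circ a^{-1}_{U,V,W}\circ(\mathrm{id}_U\otimes\xi_{V,W})\circ a_{U,V,W}=a^{-1}_{U,V,W}\circ(\mathrm{id}_U\otimes\xi_{V,W})\circ a_{U,V,W}\circ(\xi_{U,V}\otimes\mathrm{id}_W)$$ as maps $(U\otimes V)\otimes W\to(U\otimes V)\otimes W$.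
   Context: $\Bbbk$ field of characteristic $0$; vector spaces finite-dimensional; structure maps $\alpha$ bijective; $i,j$ fixed integers; $a_{X,Y,Z}((x\otimes y)\otimes z)=\alpha_X^{i+1}(x)\otimes(y\otimes\alpha_Z^{-j-1}(z))$ is the associativity constraint of $\overline{\mathcal H}^{i,j}(Vec_\Bbbk)$ (objects $(X,\alpha_X)$, $\alpha_X$ a linear automorphism). Hom-bialgebra: Hom-algebra ($\alpha(a)(bc)=(ab)\alpha(c)$, $\alpha(1)=1$, $1a=a1=\alpha(a)$), Hom-coalgebra ($\varepsilon\alpha=\varepsilon$, $\alpha(c_1)\otimes\Delta(c_2)=\Delta(c_1)\otimes\alpha(c_2)$, $\varepsilon(c_1)c_2=c_1\varepsilon(c_2)=\alpha(c)$), $\Delta,\varepsilon$ unit-preserving Hom-algebra maps. A Hom-Long dimodule is $(U,\alpha_U)$, a right $H$-Hom-module ($(u\cdot a)\cdot\alpha_H(b)=\alpha_U(u)\cdot(ab)$, $u\cdot1_H=\alpha_U(u)$) and right $H$-Hom-comodule ($\rho(u)=u_{(0)}\otimes u_{(1)}$, $\alpha_U(u_{(0)})\otimes\Delta(u_{(1)})=\rho(u_{(0)})\otimes\alpha_H(u_{(1)})$, $\varepsilon(u_{(1)})u_{(0)}=\alpha_U(u)$), structure maps commuting with the $\alpha$'s, with $\rho(u\cdot h)=u_{(0)}\cdot\alpha_H(h)\otimes\alpha_H(u_{(1)})$. *)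

(* Finite-dimensional K-vector spaces are modelled by
   coordinates: a space of dimension n is 'rV[K]_n, a linear map
   K^n -> K^p is a matrix A : 'M_(n, p) acting on the RIGHT (v |-> v *m A),
   so the composite "g o f" is the matrix  F *m G.
   The tensor product of K^n and K^m is K^(n*m) with the Kronecker product
   (tensmx, "*t", from mathcomp-real-closed's mxtens), index (a,b) |-> a*m+b. *)
From HB Require Import structures.
From mathcomp Require Import all_boot all_order all_algebra.
From mathcomp Require Export mxtens.
Set Implicit Arguments. Unset Strict Implicit. Unset Printing Implicit Defensive.
Import GRing.Theory Num.Theory.
Local Open Scope ring_scope.

Section HomDefs.
Variable K : fieldType.

Definition mxpowz {n} (A : 'M[K]_n) (k : int) : 'M[K]_n :=
  match k with
  | Posz p => iter p (mulmx A) 1%:M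
  | Negz p => iter p.+1 (mulmx (invmx A)) 1%:M
  end.

Definition assocmx n m p : 'M[K]_(n * m * p, n * (m * p)) :=
  castmx (erefl _, esym (mulnA n m p)) (1%:M : 'M[K]_(n * m * p)).
Definition assocmxV n m p : 'M[K]_(n * (m * p), n * m * p) :=
  castmx (esym (mulnA n m p), erefl _) (1%:M : 'M[K]_(n * m * p)).

(* middle interchange (a (x) b) (x) (c (x) d) |-> (a (x) c) (x) (b (x) d) *)
Definition midmx n m p q : 'M[K]_(n * m * (p * q), n * p * (m * q)) :=
  \matrix_(r, c)
    (let x := (mxtens_unindex r).1 in let y := (mxtens_unindex r).2 in
     let a := (mxtens_unindex x).1 in let b := (mxtens_unindex x).2 in
     let c' := (mxtens_unindex y).1 in let d := (mxtens_unindex y).2 in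
     (c == mxtens_index (mxtens_index (a, c'), mxtens_index (b, d)))%:R).

(* (u (x) x) (x) y |-> (u (x) y) (x) x *)
Definition swap23mx n p q : 'M[K]_(n * p * q, n * q * p) :=
  \matrix_(r, c)
    (let x := (mxtens_unindex r).1 in let y := (mxtens_unindex r).2 in
     let u := (mxtens_unindex x).1 in let z := (mxtens_unindex x).2 in
     (c == mxtens_index (mxtens_index (u, y), z))%:R).

(* u (x) (v (x) x) |-> (u (x) x) (x) v *)
Definition perm132mx n m p : 'M[K]_(n * (m * p), n * p * m) :=
  \matrix_(r, c)
    (let u := (mxtens_unindex r).1 in let y := (mxtens_unindex r).2 in
     let v := (mxtens_unindex y).1 in let x := (mxtens_unindex y).2 in
     (c == mxtens_index (mxtens_index (u, x), v))%:R).

Record hom_bialg_data := HomBialgData {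
  hdim : nat;
  halpha : 'M[K]_hdim;
  hmul : 'M[K]_(hdim * hdim, hdim);
  hunit : 'rV[K]_hdim;
  hcomul : 'M[K]_(hdim, hdim * hdim);
  hcounit : 'cV[K]_hdim }.

Definition is_hom_bialgebra (H : hom_bialg_data) : Prop :=
  let h := hdim H in let al := halpha H in let mu := hmul H in
  let e := hunit H in let D := hcomul H in let eps := hcounit H in
  [/\
      al \in unitmx,
    [/\
      mu *m al = (al *t al) *m mu,
      e *m al = e,
      (* Hom-associativity  alpha(a)(bc) = (ab)alpha(c) *)
      assocmx h h h *m (al *t mu) *m mu = (mu *t al) *m mu &
      (* 1a = a1 = alpha(a) *)
      (forall a : 'rV[K]_h, (e *t a) *m mu = a *m al /\ (a *t e) *m mu = a *m al)] &
    [/\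
      al *m D = D *m (al *t al),
      al *m eps = eps,
      (* Hom-coassociativity alpha(c1) (x) Delta(c2) = Delta(c1) (x) alpha(c2) *)
      D *m (al *t D) = D *m (D *t al) *m assocmx h h h,
      (* eps(c1)c2 = c1 eps(c2) = alpha(c) *)
      castmx (erefl _, mul1n h) (D *m (eps *t 1%:M)) = al /\
      castmx (erefl _, muln1 h) (D *m (1%:M *t eps)) = al &
      [/\ mu *m D = (D *t D) *m midmx h h h h *m (mu *t mu),
          e *m D = e *t e,
          mu *m eps = eps *t eps &
          e *m eps = 1%:M]]].

Record hom_dimod_data (H : hom_bialg_data) := HomDimodData {
  udim : nat;
  ualpha : 'M[K]_udim;
  uact : 'M[K]_(udim * hdim H, udim);
  ucoact : 'M[K]_(udim, udim * hdim H) }.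

Definition is_hom_long_dimodule (H : hom_bialg_data) (U : hom_dimod_data H) : Prop :=
  let h := hdim H in let al := halpha H in let mu := hmul H in
  let e := hunit H in let D := hcomul H in let eps := hcounit H in
  let n := udim U in let aU := ualpha U in let act := uact U in
  let rho := ucoact U in
  [/\
      aU \in unitmx,
    [/\
      (aU *t al) *m act = act *m aU,
      aU *m rho = rho *m (aU *t al),
      (* right H-Hom-module: (u.a).alpha(b) = alpha(u).(ab), u.1 = alpha(u) *)
      (act *t al) *m act = assocmx n h h *m (aU *t mu) *m act &
      (forall u : 'rV[K]_n, (u *t e) *m act = u *m aU)] &
    [/\
      rho *m (aU *t D) = rho *m (rho *t al) *m assocmx n h h,
      castmx (erefl _, muln1 n) (rho *m (1%:M *t eps)) = aU &
      (* Long compatibility: rho(u.h) = u_(0).alpha(h) (x) alpha(u_(1)) *)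
      act *m rho = (rho *t al) *m swap23mx n h h *m (act *t al)]].

(* the associativity constraint of H^{i,j}(Vec_K) and its inverse *)
Definition assoc_ij (i j : int) n m p (aX : 'M[K]_n) (aY : 'M[K]_m) (aZ : 'M[K]_p)
  : 'M[K]_(n * m * p, n * (m * p)) :=
  ((mxpowz aX (i + 1) *t (1%:M : 'M[K]_m)) *t mxpowz aZ (- j - 1)) *m assocmx n m p.
Definition assoc_ijV (i j : int) n m p (aX : 'M[K]_n) (aY : 'M[K]_m) (aZ : 'M[K]_p)
  : 'M[K]_(n * (m * p), n * m * p) :=
  assocmxV n m p *m ((mxpowz aX (- i - 1) *t (1%:M : 'M[K]_m)) *t mxpowz aZ (j + 1)).

Definition xi (H : hom_bialg_data) (m : int) (U V : hom_dimod_data H)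
  : 'M[K]_(udim U * udim V, udim U * udim V) :=
  ((1%:M : 'M[K]_(udim U)) *t ucoact V) *m perm132mx (udim U) (udim V) (hdim H)
  *m (((mxpowz (ualpha U) (-1) *t mxpowz (halpha H) m) *m uact U)
        *t mxpowz (ualpha V) (-1)).

End HomDefs.

From HB Require Import structures.
From mathcomp Require Import all_boot all_order all_algebra.
From mathcomp Require Import mxtens zify.
Set Implicit Arguments. Unset Strict Implicit. Unset Printing Implicit Defensive.
Import GRing.Theory.
Local Open Scope ring_scope.

(* Conjugated by the associator, id_U (x) xi_{V,W} sends u (x) v (x) w to
   u (x) v'.h (x) w' with h read off the coaction of W, while xi_{U,V} (x) id_W
   sends it to u'.k (x) v'' (x) w with k read off the coaction of V (primes denote
   alpha-twists).  So the two maps meet only on V, where one uses the action and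
   the other the coaction of H.  The Long condition
   rho(v.h) = v_(0).alpha(h) (x) alpha(v_(1)) says precisely that these commute,
   and it survives the alpha-twists because all structure maps commute with the
   alphas.  The rest is naturality of the reassociation and permutation matrices. *)

Section MatrixPowers.
Variable K : fieldType.

Lemma mxpowz0 n (a : 'M[K]_n) : mxpowz a 0 = 1%:M.
Proof. by []. Qed.

Lemma mxpowz1 n (a : 'M[K]_n) : mxpowz a 1 = a.
Proof. by rewrite /= mulmx1. Qed.

Lemma mxpowzDr1 n (a : 'M[K]_n) (k : int) : a \in unitmx ->
  mxpowz a (k + 1) = mxpowz a k *m a.
Proof.
have iter_comm (b : 'M[K]_n) p : iter p (mulmx b) 1%:M *m b = b *m iter p (mulmx b) 1%:M.
  by elim: p => [|p IHp] /=; rewrite ?mul1mx ?mulmx1 // -mulmxA IHp.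
move=> ua; case: k => [p|[|p]].
- have -> : (Posz p + 1 = Posz p.+1)%R by lia.
  by rewrite /= iter_comm.
- have -> : (Negz 0 + 1 = 0)%R by lia.
  by rewrite /= mulmx1 mulVmx.
- have -> : (Negz p.+1 + 1 = Negz p)%R by lia.
  by rewrite [in RHS]/= -(iter_comm (invmx a) p.+1) -mulmxA mulVmx // mulmx1.
Qed.

Lemma mxpowzBr1 n (a : 'M[K]_n) (k : int) : a \in unitmx ->
  mxpowz a (k - 1) = mxpowz a k *m invmx a.
Proof. by move=> ua; rewrite -{2}(subrK 1 k) mxpowzDr1 // mulmxK. Qed.

Lemma mxpowzD n (a : 'M[K]_n) (k l : int) : a \in unitmx ->
  mxpowz a k *m mxpowz a l = mxpowz a (k + l).
Proof.
move=> ua; elim/int_rec: l => [|l IHl|l IHl]; first by rewrite mulmx1 addr0.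
- by rewrite -addn1 PoszD addrA !mxpowzDr1 // mulmxA IHl.
- by rewrite -addn1 PoszD opprD addrA !mxpowzBr1 // mulmxA IHl.
Qed.

Lemma mxpowz_mulmx_comm n p (A : 'M[K]_n) (D : 'M[K]_p) (X : 'M[K]_(n, p)) :
  A \in unitmx -> D \in unitmx -> A *m X = X *m D ->
  forall k, mxpowz A k *m X = X *m mxpowz D k.
Proof.
move=> uA uD AX; have AVX : invmx A *m X = X *m invmx D.
  by rewrite -[LHS](mulmxK uD) -[invmx A *m X *m D]mulmxA -AX mulKmx.
elim/int_rec=> [|k IHk|k IHk]; first by rewrite mul1mx mulmx1.
- by rewrite -addn1 PoszD !mxpowzDr1 // -mulmxA AX mulmxA IHk mulmxA.
- by rewrite -addn1 PoszD opprD !mxpowzBr1 // -mulmxA AVX mulmxA IHk mulmxA.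
Qed.

Lemma mulmxA_eq m1 m2 m3 m4 m5 (A : 'M[K]_(m1, m2)) (B : 'M[K]_(m2, m3))
    (C : 'M[K]_(m1, m4)) (D : 'M[K]_(m4, m3)) (E : 'M[K]_(m3, m5)) :
  A *m B = C *m D -> A *m (B *m E) = C *m (D *m E).
Proof. by rewrite !mulmxA => ->. Qed.

Lemma tensmx11 m n : (1%:M : 'M[K]_m) *t (1%:M : 'M[K]_n) = 1%:M.
Proof.
apply/matrixP=> r c; case: (mxtens_indexP r) => a b; case: (mxtens_indexP c) => a' b'.
by rewrite tensmxE !mxE (can_eq (@mxtens_indexK m n)) xpair_eqE -natrM mulnb.
Qed.

Lemma invmx_tens m n (B : 'M[K]_m) (C : 'M[K]_n) : B \in unitmx -> C \in unitmx ->
  (B *t C) \in unitmx /\ invmx (B *t C) = invmx B *t invmx C.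
Proof.
move=> uB uC; have BCV : (B *t C) *m (invmx B *t invmx C) = 1%:M.
  by rewrite tensmx_mul !mulmxV // tensmx11.
have [uBC _] := mulmx1_unit BCV; split=> //.
by rewrite -[LHS]mulmx1 -BCV mulKmx.
Qed.

Lemma mxpowz_tens m n (B : 'M[K]_m) (C : 'M[K]_n) (k : int) :
  B \in unitmx -> C \in unitmx -> mxpowz (B *t C) k = mxpowz B k *t mxpowz C k.
Proof.
move=> uB uC; have [uBC BCV] := invmx_tens uB uC.
elim/int_rec: k => [|k IHk|k IHk]; first by rewrite tensmx11.
- by rewrite -addn1 PoszD !mxpowzDr1 // IHk tensmx_mul.
- by rewrite -addn1 PoszD opprD !mxpowzBr1 // IHk BCV tensmx_mul.
Qed.

Lemma mxpowz_intertwine_tensr n p q (A : 'M[K]_n) (B : 'M[K]_p) (C : 'M[K]_q)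
    (X : 'M[K]_(n, p * q)) (k : int) :
  A \in unitmx -> B \in unitmx -> C \in unitmx -> A *m X = X *m (B *t C) ->
  mxpowz A k *m X = X *m (mxpowz B k *t mxpowz C k).
Proof.
move=> uA uB uC AX; have [uBC _] := invmx_tens uB uC.
by rewrite (mxpowz_mulmx_comm uA uBC AX) mxpowz_tens.
Qed.

Lemma mxpowz_intertwine_tensl n p q (A : 'M[K]_n) (B : 'M[K]_p) (C : 'M[K]_q)
    (X : 'M[K]_(p * q, n)) (k : int) :
  A \in unitmx -> B \in unitmx -> C \in unitmx -> (B *t C) *m X = X *m A ->
  (mxpowz B k *t mxpowz C k) *m X = X *m mxpowz A k.
Proof.
move=> uA uB uC XA; have [uBC _] := invmx_tens uB uC.
by rewrite -mxpowz_tens // (mxpowz_mulmx_comm uBC uA XA).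
Qed.

End MatrixPowers.

Section IndexMatrices.
Variable K : fieldType.
Local Notation idx := mxtens_index.
Local Notation unidx := mxtens_unindex.

Definition idxmx N M (f : 'I_N -> 'I_M) : 'M[K]_(N, M) := \matrix_(r, c) (c == f r)%:R.

Lemma mul_idxmx N M P (f : 'I_N -> 'I_M) (A : 'M[K]_(M, P)) r c :
  (idxmx f *m A) r c = A (f r) c.
Proof.
rewrite mxE (bigD1 (f r)) //= mxE eqxx mul1r big1 ?addr0 // => s /negbTE.
by rewrite mxE eq_sym => ->; rewrite mul0r.
Qed.

Lemma mul_mx_idxmx N M P (f : 'I_N -> 'I_M) (g : 'I_M -> 'I_N) (A : 'M[K]_(P, N)) r c :
  cancel f g -> cancel g f -> (A *m idxmx f) r c = A r (g c).
Proof.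
move=> fK gK; rewrite mxE (bigD1 (g c)) //= mxE gK eqxx mulr1 big1 ?addr0 // => s /negbTE sgc.
rewrite mxE; case: eqP => [cfs|]; last by rewrite mulr0.
by rewrite cfs fK eqxx in sgc.
Qed.

Lemma idxmx_mul N M P (f : 'I_N -> 'I_M) (g : 'I_M -> 'I_P) :
  idxmx f *m idxmx g = idxmx (g \o f).
Proof. by apply/matrixP=> r c; rewrite mul_idxmx !mxE. Qed.

Lemma eq_idxmx N M (f g : 'I_N -> 'I_M) : f =1 g -> idxmx f = idxmx g.
Proof. by move=> fg; apply/matrixP=> r c; rewrite !mxE fg. Qed.

Lemma idxmx_id N : idxmx (@id 'I_N) = 1%:M.
Proof. by apply/matrixP=> r c; rewrite !mxE eq_sym. Qed.

Definition assoc_idx n m p (r : 'I_(n * m * p)) : 'I_(n * (m * p)) :=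
  let: (x, w) := unidx r in let: (u, v) := unidx x in idx (u, idx (v, w)).
Definition assocV_idx n m p (r : 'I_(n * (m * p))) : 'I_(n * m * p) :=
  let: (u, y) := unidx r in let: (v, w) := unidx y in idx (idx (u, v), w).
Definition perm132_idx n m p (r : 'I_(n * (m * p))) : 'I_(n * p * m) :=
  let: (u, y) := unidx r in let: (v, w) := unidx y in idx (idx (u, w), v).
Definition perm132V_idx n m p (r : 'I_(n * p * m)) : 'I_(n * (m * p)) :=
  let: (x, v) := unidx r in let: (u, w) := unidx x in idx (u, idx (v, w)).
Definition swap23_idx n p q (r : 'I_(n * p * q)) : 'I_(n * q * p) :=
  let: (x, w) := unidx r in let: (u, v) := unidx x in idx (idx (u, w), v).
Definition shuffle_idx n p q h (r : 'I_(n * p * (q * h))) : 'I_(n * (p * h) * q) :=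
  let: (x, y) := unidx r in let: (u, v) := unidx x in let: (w, k) := unidx y in
  idx (idx (u, idx (v, k)), w).
Definition shuffleV_idx n p q h (r : 'I_(n * (p * h) * q)) : 'I_(n * p * (q * h)) :=
  let: (x, w) := unidx r in let: (u, y) := unidx x in let: (v, k) := unidx y in
  idx (idx (u, v), idx (w, k)).

Ltac unidx_simpl :=
  cbv beta iota delta [comp fst snd];
  repeat (rewrite mxtens_indexK; cbv beta iota delta [fst snd]).

Lemma tens_idxmx N M N' M' (f : 'I_N -> 'I_M) (g : 'I_N' -> 'I_M') :
  idxmx f *t idxmx g = idxmx (fun r => let: (a, b) := unidx r in idx (f a, g b)).
Proof.
apply/matrixP=> r c; case: (mxtens_indexP r) => a b; case: (mxtens_indexP c) => a' b'.
rewrite tensmxE !mxE; unidx_simpl.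
by rewrite (can_eq (@mxtens_indexK _ _)) xpair_eqE -natrM mulnb.
Qed.

Lemma assoc_idxK n m p : cancel (@assoc_idx n m p) (@assocV_idx n m p).
Proof.
move=> r; case: (mxtens_indexP r) => x w; case: (mxtens_indexP x) => u v.
by rewrite /assoc_idx /assocV_idx; unidx_simpl.
Qed.

Lemma assocV_idxK n m p : cancel (@assocV_idx n m p) (@assoc_idx n m p).
Proof.
move=> r; case: (mxtens_indexP r) => u y; case: (mxtens_indexP y) => v w.
by rewrite /assoc_idx /assocV_idx; unidx_simpl.
Qed.

Lemma perm132_idxK n m p : cancel (@perm132_idx n m p) (@perm132V_idx n m p).
Proof.
move=> r; case: (mxtens_indexP r) => u y; case: (mxtens_indexP y) => v w.
by rewrite /perm132_idx /perm132V_idx; unidx_simpl.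
Qed.

Lemma perm132V_idxK n m p : cancel (@perm132V_idx n m p) (@perm132_idx n m p).
Proof.
move=> r; case: (mxtens_indexP r) => x v; case: (mxtens_indexP x) => u w.
by rewrite /perm132_idx /perm132V_idx; unidx_simpl.
Qed.

Lemma swap23_idxK n p q : cancel (@swap23_idx n p q) (@swap23_idx n q p).
Proof.
move=> r; case: (mxtens_indexP r) => x w; case: (mxtens_indexP x) => u v.
by rewrite /swap23_idx; unidx_simpl.
Qed.

Lemma shuffle_idxK n p q h : cancel (@shuffle_idx n p q h) (@shuffleV_idx n p q h).
Proof.
move=> r; case: (mxtens_indexP r) => x y.
case: (mxtens_indexP x) => u v; case: (mxtens_indexP y) => w k.
by rewrite /shuffle_idx /shuffleV_idx; unidx_simpl.
Qed.

Lemma shuffleV_idxK n p q h : cancel (@shuffleV_idx n p q h) (@shuffle_idx n p q h).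
Proof.
move=> r; case: (mxtens_indexP r) => x w.
case: (mxtens_indexP x) => u y; case: (mxtens_indexP y) => v k.
by rewrite /shuffle_idx /shuffleV_idx; unidx_simpl.
Qed.

Definition shufflemx n p q h := idxmx (@shuffle_idx n p q h).

Lemma assocmxE n m p : assocmx K n m p = idxmx (@assoc_idx n m p).
Proof.
apply/matrixP=> r c; case: (mxtens_indexP r) => x w; case: (mxtens_indexP x) => u v.
rewrite castmxE !mxE /assoc_idx; unidx_simpl.
by rewrite -!val_eqE /= eq_sym /mxtens_index /=; congr (_ == _)%:R; nia.
Qed.

Lemma assocmxVE n m p : assocmxV K n m p = idxmx (@assocV_idx n m p).
Proof.
apply/matrixP=> r c; case: (mxtens_indexP r) => u y; case: (mxtens_indexP y) => v w.
rewrite castmxE !mxE /assocV_idx; unidx_simpl.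
by rewrite -!val_eqE /= eq_sym /mxtens_index /=; congr (_ == _)%:R; nia.
Qed.

Lemma perm132mxE n m p : perm132mx K n m p = idxmx (@perm132_idx n m p).
Proof.
apply/matrixP=> r c; case: (mxtens_indexP r) => u y; case: (mxtens_indexP y) => v w.
by rewrite !mxE /perm132_idx; unidx_simpl.
Qed.

Lemma swap23mxE n p q : swap23mx K n p q = idxmx (@swap23_idx n p q).
Proof.
apply/matrixP=> r c; case: (mxtens_indexP r) => x w; case: (mxtens_indexP x) => u v.
by rewrite !mxE /swap23_idx; unidx_simpl.
Qed.

Lemma assocmxK n m p : assocmx K n m p *m assocmxV K n m p = 1%:M.
Proof. by rewrite assocmxE assocmxVE idxmx_mul -idxmx_id; apply/eq_idxmx/assoc_idxK. Qed.

Lemma assocmx_tens n1 m1 p1 n2 m2 p2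
    (A : 'M[K]_(n1, n2)) (B : 'M[K]_(m1, m2)) (C : 'M[K]_(p1, p2)) :
  assocmx K n1 m1 p1 *m (A *t (B *t C)) = ((A *t B) *t C) *m assocmx K n2 m2 p2.
Proof.
rewrite !assocmxE; apply/matrixP=> r c.
rewrite mul_idxmx (mul_mx_idxmx _ _ _ (@assoc_idxK _ _ _) (@assocV_idxK _ _ _)).
case: (mxtens_indexP r) => x r3; case: (mxtens_indexP x) => r1 r2.
case: (mxtens_indexP c) => c1 y; case: (mxtens_indexP y) => c2 c3.
by rewrite /assoc_idx /assocV_idx; unidx_simpl; rewrite !tensmxE mulrA.
Qed.

Lemma swap23mx_tens n1 p1 q1 n2 p2 q2
    (A : 'M[K]_(n1, n2)) (B : 'M[K]_(p1, p2)) (C : 'M[K]_(q1, q2)) :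
  ((A *t B) *t C) *m swap23mx K n2 p2 q2 = swap23mx K n1 p1 q1 *m ((A *t C) *t B).
Proof.
rewrite !swap23mxE; apply/matrixP=> r c.
rewrite mul_idxmx (mul_mx_idxmx _ _ _ (@swap23_idxK _ _ _) (@swap23_idxK _ _ _)).
case: (mxtens_indexP r) => x r3; case: (mxtens_indexP x) => r1 r2.
case: (mxtens_indexP c) => y c3; case: (mxtens_indexP y) => c1 c2.
by rewrite /swap23_idx; unidx_simpl; rewrite !tensmxE mulrAC.
Qed.

Lemma perm132mx_tens n1 m1 p1 n2 m2 p2
    (A : 'M[K]_(n1, n2)) (B : 'M[K]_(m1, m2)) (C : 'M[K]_(p1, p2)) :
  (A *t (B *t C)) *m perm132mx K n2 m2 p2 = perm132mx K n1 m1 p1 *m ((A *t C) *t B).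
Proof.
rewrite !perm132mxE; apply/matrixP=> r c.
rewrite mul_idxmx (mul_mx_idxmx _ _ _ (@perm132_idxK _ _ _) (@perm132V_idxK _ _ _)).
case: (mxtens_indexP r) => r1 y; case: (mxtens_indexP y) => r2 r3.
case: (mxtens_indexP c) => x c2; case: (mxtens_indexP x) => c1 c3.
by rewrite /perm132_idx /perm132V_idx; unidx_simpl; rewrite !tensmxE mulrA mulrAC.
Qed.

Lemma shufflemx_tens n1 p1 q1 h1 n2 p2 q2 h2 (A : 'M[K]_(n1, n2)) (B : 'M[K]_(p1, p2))
    (C : 'M[K]_(q1, q2)) (D : 'M[K]_(h1, h2)) :
  ((A *t B) *t (C *t D)) *m shufflemx n2 p2 q2 h2
  = shufflemx n1 p1 q1 h1 *m ((A *t (B *t D)) *t C).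
Proof.
apply/matrixP=> r c.
rewrite mul_idxmx (mul_mx_idxmx _ _ _ (@shuffle_idxK _ _ _ _) (@shuffleV_idxK _ _ _ _)).
case: (mxtens_indexP r) => x y; case: (mxtens_indexP x) => r1 r2.
case: (mxtens_indexP y) => r3 r4; case: (mxtens_indexP c) => x' c3.
case: (mxtens_indexP x') => c1 y'; case: (mxtens_indexP y') => c2 c4.
by rewrite /shuffle_idx /shuffleV_idx; unidx_simpl; rewrite !tensmxE !mulrA mulrAC.
Qed.

Lemma assocmx_perm132mx n p q h :
  assocmx K n p (q * h) *m (1%:M *t perm132mx K p q h)
  = shufflemx n p q h *m assocmx K n (p * h) q.
Proof.
rewrite !assocmxE perm132mxE -idxmx_id tens_idxmx !idxmx_mul; apply: eq_idxmx => r.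
case: (mxtens_indexP r) => x y; case: (mxtens_indexP x) => u v.
case: (mxtens_indexP y) => w k.
by rewrite /assoc_idx /shuffle_idx /perm132_idx; unidx_simpl.
Qed.

Lemma perm132mx_shufflemx n p q h :
  (perm132mx K n p h *t (1%:M *t 1%:M)) *m shufflemx (n * h) p q h
  = shufflemx n (p * h) q h *m ((1%:M *t swap23mx K p h h) *t 1%:M)
    *m (perm132mx K n (p * h) h *t (1%:M : 'M_q)).
Proof.
rewrite -!idxmx_id !perm132mxE swap23mxE !tens_idxmx !idxmx_mul; apply: eq_idxmx => r.
case: (mxtens_indexP r) => x y; case: (mxtens_indexP x) => u z.
case: (mxtens_indexP z) => v k; case: (mxtens_indexP y) => w k'.
by rewrite /shuffle_idx /perm132_idx /swap23_idx; unidx_simpl.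
Qed.

End IndexMatrices.

Section Commutation.
Variables (K : fieldType) (n p q h : nat).
Variables (x : 'M[K]_(n * h, n)) (r : 'M[K]_(p, p * h)).
Variables (y : 'M[K]_(p * h, p)) (s : 'M[K]_(q, q * h)).
Local Notation I k := (1%:M : 'M[K]_k).

(* In the theorem, xiL is the matrix of xi_{U,V} (x) id_W and xiR that of
   a *m (id_U *t xi_{V,W}) *m ainv; x, r are the alpha-twisted action of U and
   coaction of V, and y, s those of V and W. *)
Local Notation xiL :=
  (((I n *t r) *t I q) *m (perm132mx K n p h *t I q) *m ((x *t I p) *t I q)).
Local Notation xiR :=
  (((I n *t I p) *t s) *m shufflemx K n p q h *m ((I n *t y) *t I q)).
Local Notation xiLR := (((I n *t r) *t s) *m (perm132mx K n p h *t (I q *t I h))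
  *m shufflemx K (n * h) p q h *m ((x *t y) *t I q)).

Lemma xiL_xiR : xiL *m xiR = xiLR.
Proof.
have x_s : ((x *t I p) *t I q) *m ((I n *t I p) *t s)
    = ((I (n * h) *t I p) *t s) *m ((x *t I p) *t (I q *t I h)).
  by rewrite !tensmx_mul !mulmx1 !mul1mx tensmx11 mulmx1.
have x_y : ((x *t (I p *t I h)) *t I q) *m ((I n *t y) *t I q) = (x *t y) *t I q.
  by rewrite !tensmx_mul !mulmx1 tensmx11 mul1mx.
have P_s : (perm132mx K n p h *t I q) *m ((I (n * h) *t I p) *t s)
    = perm132mx K n p h *t s.
  by rewrite tensmx_mul tensmx11 mulmx1 mul1mx.
have r_Ps : ((I n *t r) *t I q) *m (perm132mx K n p h *t s)
    = ((I n *t r) *t s) *m (perm132mx K n p h *t (I q *t I h)).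
  by rewrite !tensmx_mul tensmx11 !mulmx1 mul1mx.
rewrite -!mulmxA (mulmxA_eq _ x_s) (mulmxA_eq _ (shufflemx_tens _ _ _ _)) x_y.
by rewrite !mulmxA -(mulmxA _ (perm132mx K n p h *t I q)) P_s r_Ps.
Qed.

Hypothesis long_yr : y *m r = (r *t I h) *m swap23mx K p h h *m (y *t I h).

Lemma xiR_xiL : xiR *m xiL = xiLR.
Proof.
have y_r : ((I n *t y) *t I q) *m ((I n *t r) *t I q)
    = ((I n *t (r *t I h)) *t I q) *m
      (((I n *t swap23mx K p h h) *t I q) *m ((I n *t (y *t I h)) *t I q)).
  by rewrite !mulmxA !tensmx_mul !mulmx1 long_yr.
have s_r : ((I n *t I p) *t s) *m ((I n *t r) *t (I q *t I h)) = (I n *t r) *t s.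
  by rewrite !tensmx_mul tensmx11 !mulmx1 !mul1mx.
have y_Px : ((I n *t (y *t I h)) *t I q) *m
      ((perm132mx K n p h *t I q) *m ((x *t I p) *t I q))
    = (perm132mx K n (p * h) h *t I q) *m ((x *t y) *t I q).
  rewrite !mulmxA !tensmx_mul !mulmx1 perm132mx_tens -mulmxA tensmx_mul.
  by rewrite tensmx11 mul1mx mulmx1.
rewrite -!mulmxA (mulmxA_eq _ y_r) -!mulmxA.
rewrite (mulmxA_eq _ (esym (shufflemx_tens _ _ _ _))) y_Px !mulmxA s_r.
by rewrite -!mulmxA; congr (_ *m _); rewrite !mulmxA perm132mx_shufflemx.
Qed.

Lemma xiL_xiR_comm : xiR *m xiL = xiL *m xiR.
Proof. by rewrite xiR_xiL xiL_xiR. Qed.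

End Commutation.

Section Twisting.
Variable K : fieldType.
Local Notation I k := (1%:M : 'M[K]_k).
Local Notation T := mxpowz.

Lemma long_twisted p h (aV : 'M[K]_p) (aH : 'M[K]_h) (rho : 'M[K]_(p, p * h))
    (act : 'M[K]_(p * h, p)) (b : int) :
  aV \in unitmx -> aH \in unitmx ->
  aV *m rho = rho *m (aV *t aH) -> (aV *t aH) *m act = act *m aV ->
  act *m rho = (rho *t aH) *m swap23mx K p h h *m (act *t aH) ->
  let y := (T aV (-1) *t T aH b) *m act in let r := rho *m (T aV (-1) *t I h) in
  y *m r = (r *t I h) *m swap23mx K p h h *m (y *t I h).
Proof.
move=> uV uH rhoV actV long y r.
have rhoVV : T aV (-1) *m rho = rho *m (T aV (-1) *t T aH (-1)).
  exact: mxpowz_intertwine_tensr.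
have actVV : act *m T aV (-1) = (T aV (-1) *t T aH (-1)) *m act.
  by rewrite (mxpowz_intertwine_tensl _ uV).
have aHVK : T aH (-1) *m aH = I h by rewrite -{2}(mxpowz1 aH) mxpowzD.
have aHbK : T aH b *m aH *m T aH (-1) = T aH b.
  by rewrite -{2}(mxpowz1 aH) !mxpowzD // addrK.
rewrite /y /r {y r}; move: rhoVV actVV aHVK aHbK.
move: (T aV (-1)) (T aH b) (T aH (-1)) => TV Tb Tm rhoVV actVV aHVK aHbK.
transitivity ((rho *t I h) *m swap23mx K p h h *m ((((TV *m TV) *t Tb) *m act) *t I h)).
  have rho_tw : (TV *t Tb) *m (rho *t aH) = (rho *t I h) *m ((TV *t Tm) *t (Tb *m aH)).
    by rewrite !tensmx_mul rhoVV mul1mx.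
  have act_tw : (act *t aH) *m (TV *t I h) = ((TV *t Tm) *m act) *t aH.
    by rewrite tensmx_mul mulmx1 actVV.
  have tw : ((TV *t (Tb *m aH)) *t Tm) *m (((TV *t Tm) *m act) *t aH)
      = (((TV *m TV) *t Tb) *m act) *t I h.
    by rewrite tensmx_mul mulmxA tensmx_mul aHbK aHVK.
  rewrite -mulmxA (mulmxA act) long -!mulmxA act_tw !mulmxA rho_tw.
  by rewrite -(mulmxA _ _ (swap23mx _ _ _ _)) swap23mx_tens -!mulmxA tw.
have r_tw : (rho *m (TV *t I h)) *t I h = (rho *t I h) *m ((TV *t I h) *t I h).
  by rewrite tensmx_mul mulmx1.
rewrite r_tw -(mulmxA _ _ (swap23mx _ _ _ _)) swap23mx_tens -!mulmxA.
by congr (_ *m (_ *m _)); rewrite tensmx_mul mulmx1 mulmxA tensmx_mul mul1mx.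
Qed.

Lemma xi_tensmx1 n p h q (rho : 'M[K]_(p, p * h)) (TV : 'M[K]_p) (x : 'M[K]_(n * h, n)) :
  ((I n *t rho) *m perm132mx K n p h *m (x *t TV)) *t I q
  = ((I n *t (rho *m (TV *t I h))) *t I q) *m (perm132mx K n p h *t I q)
    *m ((x *t I p) *t I q).
Proof.
rewrite !tensmx_mul !mulmx1; congr (_ *t _).
rewrite -[in RHS](mulmx1 (I n)) -tensmx_mul -!mulmxA; congr (_ *m _).
by rewrite mulmxA perm132mx_tens -mulmxA tensmx_mul tensmx11 mul1mx mulmx1.
Qed.

Lemma assocmx_conj_xi n p q h (rho : 'M[K]_(q, q * h)) (y : 'M[K]_(p * h, p))
    (T' : 'M[K]_q) :
  assocmx K n p q *m (I n *t ((I p *t rho) *m perm132mx K p q h *m (y *t T')))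
    *m assocmxV K n p q
  = ((I n *t I p) *t rho) *m shufflemx K n p q h *m ((I n *t y) *t T').
Proof.
have split_xi : I n *t ((I p *t rho) *m perm132mx K p q h *m (y *t T'))
    = (I n *t (I p *t rho)) *m ((I n *t perm132mx K p q h) *m (I n *t (y *t T'))).
  by rewrite !tensmx_mul !mulmx1 mulmxA.
rewrite split_xi -!mulmxA (mulmxA_eq _ (assocmx_tens _ _ _)).
rewrite (mulmxA_eq _ (assocmx_perm132mx _ _ _ _ _)) (mulmxA_eq _ (assocmx_tens _ _ _)).
by rewrite assocmxK mulmx1 tensmx11 !mulmxA.
Qed.

Lemma assoc_conj_xi n p q h (i j : int) (aU : 'M[K]_n) (aV : 'M[K]_p) (aW : 'M[K]_q)
    (aH : 'M[K]_h) (rhoW : 'M[K]_(q, q * h)) (y : 'M[K]_(p * h, p)) :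
  aU \in unitmx -> aW \in unitmx -> aH \in unitmx -> aW *m rhoW = rhoW *m (aW *t aH) ->
  assoc_ij i j aU aV aW *m (I n *t ((I p *t rhoW) *m perm132mx K p q h *m (y *t T aW (-1))))
    *m assoc_ijV i j aU aV aW
  = ((I n *t I p) *t (rhoW *m (T aW (-1) *t I h))) *m shufflemx K n p q h
    *m ((I n *t ((I p *t T aH (- j - 1)) *m y)) *t I q).
Proof.
move=> uU uW uH rhoW_aW.
have rhoWj : T aW (- j - 1) *m rhoW = rhoW *m (T aW (- j - 1) *t T aH (- j - 1)).
  exact: mxpowz_intertwine_tensr.
have aUK : T aU (i + 1) *m T aU (- i - 1) = I n.
  by rewrite mxpowzD // -(mxpowz0 aU); congr mxpowz; lia.
have aWK : T aW (- j - 1) *m T aW (-1) *m T aW (j + 1) = T aW (-1).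
  by rewrite !mxpowzD //; congr mxpowz; lia.
rewrite /assoc_ij /assoc_ijV !mulmxA -(mulmxA _ (assocmx _ _ _ _)).
rewrite -(mulmxA _ (assocmx _ _ _ _ *m _)) assocmx_conj_xi.
move: rhoWj aUK aWK.
move: (T aU (i + 1)) (T aU (- i - 1)) (T aW (- j - 1)) (T aW (-1)) (T aW (j + 1))
  (T aH (- j - 1)) => TU TU' TW TW1 TW' TH rhoWj aUK aWK.
have aU_rhoW : ((TU *t I p) *t TW) *m ((I n *t I p) *t rhoW)
    = ((I n *t I p) *t rhoW) *m ((TU *t I p) *t (TW *t TH)).
  by rewrite !tensmx_mul !mulmx1 !mul1mx rhoWj.
have powers_cancel : ((TU *t (I p *t TH)) *t TW)
      *m (((I n *t y) *t TW1) *m ((TU' *t I p) *t TW'))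
    = (I n *t ((I p *t TH) *m y)) *t TW1.
  by rewrite !tensmx_mul !mulmx1 mul1mx aUK mulmxA aWK.
have rhoW_tw : (I n *t I p) *t (rhoW *m (TW1 *t I h))
    = ((I n *t I p) *t rhoW) *m ((I n *t I p) *t (TW1 *t I h)).
  by rewrite tensmx_mul tensmx11 mulmx1.
rewrite !mulmxA aU_rhoW -(mulmxA _ _ (shufflemx _ _ _ _ _)) shufflemx_tens -!mulmxA.
rewrite powers_cancel rhoW_tw -!mulmxA; congr (_ *m _).
rewrite mulmxA shufflemx_tens -mulmxA; congr (_ *m _).
by rewrite tensmx_mul !tensmx11 !mul1mx mulmx1.
Qed.

End Twisting.

Theorem theorem6p4 (K : fieldType) (charK0 : [pchar K] =i pred0) (i j : int)
  (H : hom_bialg_data K) (HH : is_hom_bialgebra H) (m : int)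
  (U V W : hom_dimod_data H)
  (HU : is_hom_long_dimodule U) (HV : is_hom_long_dimodule V)
  (HW : is_hom_long_dimodule W) :
  let a := assoc_ij i j (ualpha U) (ualpha V) (ualpha W) in
  let ainv := assoc_ijV i j (ualpha U) (ualpha V) (ualpha W) in
  let idU := (1%:M : 'M[K]_(udim U)) in
  let idW := (1%:M : 'M[K]_(udim W)) in
  (* (xi_{U,V} (x) id_W) o a^{-1} o (id_U (x) xi_{V,W}) o a,
     written in the right-action convention (first map on the left) *)
  a *m (idU *t xi m V W) *m ainv *m (xi m U V *t idW)
  = (xi m U V *t idW) *m a *m (idU *t xi m V W) *m ainv.
Proof.
move=> a ainv idU idW.
case: HH => uH _ _; case: HU => uU _ _; case: HW => uW [_ rhoW _ _] _.
case: HV => uV [actV rhoV _ _] [_ _ longV].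
rewrite /a /ainv /idU /idW -[RHS]mulmxA -[RHS]mulmxA [X in _ = _ *m X]mulmxA.
rewrite /xi (assoc_conj_xi i j _ _ uU uW uH rhoW) xi_tensmx1.
rewrite mulmxA tensmx_mul mul1mx mxpowzD //.
apply: xiL_xiR_comm; exact: long_twisted.
Qed.
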